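(* For $x\in(0,1)$ let $x'=\sqrt{1-x^2}$ and $f(x)=x^2x'^2\,\mathcal{K}(x)\mathcal{K}(x')$. Then $f$ is increasing on $(0,1/\sqrt2]$ and decreasing on $[1/\sqrt2,1)$, and $$\max_{0<x<1}f(x)=f(\sqrt{1/2})=\tfrac14\big(\mathcal{K}(\sqrt{1/2})\big)^2=0.859398\ldots.$$
   Context: $\mathcal{K}(x)=\frac{\pi}{2}F(\tfrac12,\tfrac12;1;x^2)$ for $x\in(0,1)$ is the complete elliptic integral of the first kind, where $F(a,b;c;x)=\sum_{n\ge0}\frac{(a,n)(b,n)}{(c,n)n!}x^n$ and $(a,n)=a(a+1)\cdots(a+n-1)$, $(a,0)=1$. *)

From Stdlib Require Import Reals Lra.
From Coquelicot Require Import Coquelicot.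
Open Scope R_scope.

Fixpoint poch (a : R) (n : nat) : R :=
  match n with
  | O => 1
  | S m => poch a m * (a + INR m)
  end.

Definition hypF (a b c x : R) : R :=
  Series (fun n => poch a n * poch b n / (poch c n * INR (Factorial.fact n)) * x ^ n).

Definition ellK (x : R) : R := PI / 2 * hypF (1/2) (1/2) 1 (x ^ 2).

Definition kprime (x : R) : R := sqrt (1 - x ^ 2).

Definition fcor (x : R) : R := x ^ 2 * kprime x ^ 2 * ellK x * ellK (kprime x).

From Stdlib Require Import Reals Lra Lia.
From Coquelicot Require Import Coquelicot.
Open Scope R_scope.

(* Put t = x^2 and F = F(1/2,1/2;1;.), so that f(x) = (pi/2)^2 t(1-t) F(t) F(1-t),
   a function of t symmetric under t <-> 1-t.  Its derivative is
   (F(1-t) A(t) - F(t) A(1-t)) / 2 with A(t) = (1-2t) F(t) + 2t(1-t) F'(t).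
   F has positive Taylor coefficients a_n, hence increases, while the Taylor
   coefficients (2n+1) a_n - 2n a_(n-1) of A are nonpositive for n >= 1, hence A
   decreases; as A(t) > 0 for t < 1/2, the derivative is positive on (0, 1/2).
   The numerical value follows from bounds on pi and twenty terms of F(1/2)
   with a geometric tail. *)

(* The coefficients of F(1/2,1/2;1;.) in recursive form, so that they compute. *)
Fixpoint ellK_coef (n : nat) : R :=
  match n with
  | O => 1
  | S m => ellK_coef m * ((2 * INR m + 1) / (2 * INR m + 2)) ^ 2
  end.

Lemma poch_pos x n : 0 < x -> 0 < poch x n.
Proof.
  intro Hx; induction n as [|n IH]; simpl; [lra|].
  apply Rmult_lt_0_compat; [exact IH|]. generalize (pos_INR n); lra.
Qed.

Lemma ellK_coef_poch n :
  ellK_coef n = poch (1/2) n * poch (1/2) n / (poch 1 n * INR (Factorial.fact n)).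
Proof.
  induction n as [|n IH]; [simpl; field|].
  cbn [ellK_coef poch]. rewrite IH, fact_simpl, mult_INR, S_INR.
  assert (H1 := poch_pos (1/2) n ltac:(lra)).
  assert (H2 := poch_pos 1 n ltac:(lra)).
  assert (H3 := INR_fact_lt_0 n).
  assert (H4 := pos_INR n).
  field; repeat split; lra.
Qed.

Lemma ellK_coef_pos n : 0 < ellK_coef n.
Proof.
  induction n as [|n IH]; cbn [ellK_coef]; [lra|].
  assert (H := pos_INR n).
  apply Rmult_lt_0_compat; [exact IH|]. apply pow_lt, Rdiv_lt_0_compat; lra.
Qed.

Lemma ellK_coef_S_le n : ellK_coef (S n) <= ellK_coef n.
Proof.
  cbn [ellK_coef]. assert (H := pos_INR n). assert (Hc := ellK_coef_pos n).
  assert (Hq : 0 <= (2 * INR n + 1) / (2 * INR n + 2) <= 1).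
  { split; [apply Rlt_le, Rdiv_lt_0_compat; lra|].
    apply (Rdiv_le_1 (2 * INR n + 1)); lra. }
  set (q := (2 * INR n + 1) / (2 * INR n + 2)) in *.
  assert (q ^ 2 <= 1) by (simpl; nra).
  nra.
Qed.

Lemma ellK_coef_antitone m n : (m <= n)%nat -> ellK_coef n <= ellK_coef m.
Proof.
  induction 1 as [|n _ IH]; [lra|]. generalize (ellK_coef_S_le n); lra.
Qed.

Lemma ellK_coef_lt_radius t :
  Rabs t < 1 -> Rbar_lt (Rabs t) (CV_radius ellK_coef).
Proof.
  intro Ht.
  assert (R1 : Rbar_le 1 (CV_radius ellK_coef)).
  { apply (proj1 (CV_radius_bounded ellK_coef)). exists 1. intro n.
    rewrite pow1, Rmult_1_r, Rabs_pos_eq by apply Rlt_le, ellK_coef_pos.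
    apply (ellK_coef_antitone 0); lia. }
  destruct (CV_radius ellK_coef); simpl in *; lra.
Qed.

Definition ellF (t : R) : R := PSeries ellK_coef t.
Definition ellF' (t : R) : R := PSeries (PS_derive ellK_coef) t.

Lemma ellK_ellF x : ellK x = PI / 2 * ellF (x ^ 2).
Proof.
  unfold ellK, hypF, ellF, PSeries. f_equal. apply Series_ext. intro n.
  rewrite ellK_coef_poch. reflexivity.
Qed.

Lemma is_pseries_ellF t : Rabs t < 1 -> is_pseries ellK_coef t (ellF t).
Proof.
  intro Ht. apply PSeries_correct, CV_radius_inside, ellK_coef_lt_radius, Ht.
Qed.

Lemma is_pseries_ellF' t :
  Rabs t < 1 -> is_pseries (PS_derive ellK_coef) t (ellF' t).
Proof.
  intro Ht. apply PSeries_correct, ex_pseries_derive, ellK_coef_lt_radius, Ht.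
Qed.

Lemma is_derive_ellF t : Rabs t < 1 -> is_derive ellF t (ellF' t).
Proof. intro Ht. apply is_derive_PSeries, ellK_coef_lt_radius, Ht. Qed.

Lemma is_series_partial_le (u : nat -> R) l N :
  (forall n, 0 <= u n) -> is_series u l -> sum_f_R0 u N <= l.
Proof. intros Hu Hl. apply sum_incr; [apply is_series_Reals, Hl | exact Hu]. Qed.

Lemma is_pseries_ge_coef_0 (b : nat -> R) t l :
  (forall n, 0 <= b n) -> 0 <= t -> is_pseries b t l -> b O <= l.
Proof.
  intros Hb Ht Hl. rewrite is_pseries_R in Hl.
  replace (b O) with (sum_f_R0 (fun n => b n * t ^ n) 0) by (simpl; ring).
  apply is_series_partial_le, Hl.
  intro n. apply Rmult_le_pos; [apply Hb | apply pow_le, Ht].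
Qed.

Lemma is_pseries_strict_mono (b : nat -> R) r s lr ls :
  (forall n, (1 <= n)%nat -> 0 <= b n) -> 0 < b 1%nat -> 0 <= r < s ->
  is_pseries b r lr -> is_pseries b s ls -> lr < ls.
Proof.
  intros Hb Hb1 Hrs Hr Hs. rewrite is_pseries_R in Hr, Hs.
  assert (Hd := is_series_minus _ _ _ _ Hs Hr).
  assert (H1 : sum_f_R0 (fun n => minus (b n * s ^ n) (b n * r ^ n)) 1 <= minus ls lr).
  { apply is_series_partial_le, Hd. intros [|n]; unfold minus, plus, opp; simpl.
    - lra.
    - assert (r ^ S n <= s ^ S n) by (apply pow_incr; lra).
      assert (0 <= b (S n)) by (apply Hb; lia). simpl in *. nra. }
  unfold minus, plus, opp in H1; simpl in H1. nra.
Qed.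

Lemma ellF_lt r s : 0 <= r < s -> s < 1 -> ellF r < ellF s.
Proof.
  intros Hrs Hs.
  apply (is_pseries_strict_mono ellK_coef r s);
    [intros; apply Rlt_le, ellK_coef_pos | apply ellK_coef_pos | exact Hrs
    | apply is_pseries_ellF | apply is_pseries_ellF]; rewrite Rabs_pos_eq; lra.
Qed.

Lemma ellF_ge_1 t : 0 <= t < 1 -> 1 <= ellF t.
Proof.
  intro Ht. apply (is_pseries_ge_coef_0 ellK_coef t);
    [intro; apply Rlt_le, ellK_coef_pos | lra | apply is_pseries_ellF].
  rewrite Rabs_pos_eq; lra.
Qed.

Lemma ellF'_nonneg t : 0 <= t < 1 -> 0 <= ellF' t.
Proof.
  intro Ht.
  assert (Hb : forall n, 0 <= PS_derive ellK_coef n).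
  { intro n. apply Rmult_le_pos; [apply pos_INR | apply Rlt_le, ellK_coef_pos]. }
  apply (Rle_trans _ (PS_derive ellK_coef O)); [apply Hb|].
  apply (is_pseries_ge_coef_0 _ t); [exact Hb | lra | apply is_pseries_ellF'].
  rewrite Rabs_pos_eq; lra.
Qed.

Definition ellA (t : R) : R := (1 - 2 * t) * ellF t + 2 * t * (1 - t) * ellF' t.

(* At n = 0 the junk value [pred 0 = 0] is multiplied by [INR 0 = 0]. *)
Definition ellA_coef (n : nat) : R :=
  (2 * INR n + 1) * ellK_coef n - 2 * INR n * ellK_coef (pred n).

Lemma is_pseries_ellA t : Rabs t < 1 -> is_pseries ellA_coef t (ellA t).
Proof.
  intro Ht.
  assert (HF := is_pseries_ellF t Ht). assert (HF' := is_pseries_ellF' t Ht).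
  assert (H := is_pseries_plus _ _ _ _ _
    (is_pseries_plus _ _ _ _ _ HF
       (is_pseries_scal (-2) _ _ _ (Rmult_comm _ _) (is_pseries_incr_1 _ _ _ HF)))
    (is_pseries_plus _ _ _ _ _
       (is_pseries_scal 2 _ _ _ (Rmult_comm _ _) (is_pseries_incr_1 _ _ _ HF'))
       (is_pseries_scal (-2) _ _ _ (Rmult_comm _ _)
          (is_pseries_incr_1 _ _ _ (is_pseries_incr_1 _ _ _ HF'))))).
  replace (ellA t) with
    (plus (plus (ellF t) (scal (-2) (scal t (ellF t))))
       (plus (scal 2 (scal t (ellF' t))) (scal (-2) (scal t (scal t (ellF' t))))))
    by (unfold ellA, plus, scal; simpl; unfold mult; simpl; ring).
  revert H. apply is_pseries_ext. intros [|[|n]];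
    unfold ellA_coef, PS_plus, PS_scal, PS_incr_1, PS_derive, plus, scal, zero;
    cbn -[ellK_coef INR]; rewrite ?S_INR; cbn [INR]; unfold mult; simpl; ring.
Qed.

Lemma ellA_coef_nonpos n : (1 <= n)%nat -> ellA_coef n <= 0.
Proof.
  destruct n as [|m]; [lia|]. intros _.
  unfold ellA_coef. cbn [ellK_coef pred]. rewrite S_INR.
  assert (Hx := pos_INR m). assert (Hc := ellK_coef_pos m).
  set (x := INR m) in *.
  replace ((2 * (x + 1) + 1) * (ellK_coef m * ((2 * x + 1) / (2 * x + 2)) ^ 2)
           - 2 * (x + 1) * ellK_coef m)
    with (- ellK_coef m * (4 * x ^ 2 + 10 * x + 5) / (2 * x + 2) ^ 2)
    by (field; lra).
  apply Rmult_le_0_r; [nra | apply Rlt_le, Rinv_0_lt_compat, pow_lt; lra].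
Qed.

Lemma ellA_coef_1 : ellA_coef 1 = -5/4.
Proof. unfold ellA_coef; simpl. field. Qed.

Lemma ellA_lt r s : 0 <= r < s -> s < 1 -> ellA s < ellA r.
Proof.
  intros Hrs Hs.
  apply Ropp_lt_cancel, (is_pseries_strict_mono (PS_opp ellA_coef) r s (- ellA r) (- ellA s)).
  - intros n Hn. unfold PS_opp, opp; simpl. generalize (ellA_coef_nonpos n Hn); lra.
  - unfold PS_opp, opp; simpl. rewrite ellA_coef_1; lra.
  - exact Hrs.
  - exact (is_pseries_opp _ _ _ (is_pseries_ellA r ltac:(rewrite Rabs_pos_eq; lra))).
  - exact (is_pseries_opp _ _ _ (is_pseries_ellA s ltac:(rewrite Rabs_pos_eq; lra))).
Qed.

Definition fcor_t (t : R) : R := t * (1 - t) * ellF t * ellF (1 - t).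

Lemma fcor_t_sym t : fcor_t (1 - t) = fcor_t t.
Proof. unfold fcor_t. replace (1 - (1 - t)) with t by ring. ring. Qed.

Lemma is_derive_fcor_t t : 0 < t < 1 ->
  is_derive fcor_t t ((ellF (1 - t) * ellA t - ellF t * ellA (1 - t)) / 2).
Proof.
  intro Ht.
  assert (H1 := is_derive_ellF t ltac:(rewrite Rabs_pos_eq; lra)).
  assert (H2 := is_derive_ellF (1 - t) ltac:(rewrite Rabs_pos_eq; lra)).
  unfold fcor_t. auto_derive.
  - replace (1 + - t) with (1 - t) by ring.
    split; [eexists; exact H1 | split; [eexists; exact H2 | exact I]].
  - replace (1 + - t) with (1 - t) by ring.
    replace (Derive (fun x => ellF x) t) with (ellF' t)
      by (symmetry; apply is_derive_unique, H1).
    replace (Derive (fun x => ellF x) (1 - t)) with (ellF' (1 - t))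
      by (symmetry; apply is_derive_unique, H2).
    unfold ellA. field.
Qed.

Lemma fcor_t_derive_pos t : 0 < t < 1/2 ->
  0 < ellF (1 - t) * ellA t - ellF t * ellA (1 - t).
Proof.
  intro Ht.
  assert (HF := ellF_lt t (1 - t) ltac:(lra) ltac:(lra)).
  assert (HA := ellA_lt t (1 - t) ltac:(lra) ltac:(lra)).
  assert (HF1 := ellF_ge_1 t ltac:(lra)).
  assert (HA0 : 0 < ellA t).
  { assert (HF' := ellF'_nonneg t ltac:(lra)). unfold ellA.
    assert (0 <= 2 * t * (1 - t) * ellF' t)
      by (apply Rmult_le_pos; [nra | exact HF']).
    nra. }
  nra.
Qed.

Lemma fcor_t_lt s t : 0 < s < t -> t <= 1/2 -> fcor_t s < fcor_t t.
Proof.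
  intros Hst Ht.
  destruct (MVT_cor2 fcor_t
    (fun u => (ellF (1 - u) * ellA u - ellF u * ellA (1 - u)) / 2) s t)
    as [c [Hc Hcst]]; [lra | |].
  - intros c Hc. apply is_derive_Reals, is_derive_fcor_t. lra.
  - assert (Hd := fcor_t_derive_pos c ltac:(lra)). nra.
Qed.

Lemma fcor_t_gt s t : 1/2 <= s < t -> t < 1 -> fcor_t t < fcor_t s.
Proof.
  intros Hst Ht. rewrite <- (fcor_t_sym s), <- (fcor_t_sym t). apply fcor_t_lt; lra.
Qed.

Lemma fcor_t_le_half t : 0 < t < 1 -> fcor_t t <= fcor_t (1/2).
Proof.
  intro Ht. destruct (Rtotal_order t (1/2)) as [H | [-> | H]].
  - apply Rlt_le, fcor_t_lt; lra.
  - apply Rle_refl.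
  - apply Rlt_le, fcor_t_gt; lra.
Qed.

Lemma is_pseries_le_partial_geom (b : nat -> R) x l N :
  (forall n, 0 <= b n) -> (forall m n, (m <= n)%nat -> b n <= b m) ->
  0 <= x < 1 -> is_pseries b x l ->
  l <= sum_f_R0 (fun n => b n * x ^ n) N + b (S N) * x ^ S N / (1 - x).
Proof.
  intros Hb Hanti Hx Hl. rewrite is_pseries_R in Hl.
  set (u := fun n => b n * x ^ n) in *.
  assert (Hu : ex_series u) by (eexists; exact Hl).
  rewrite <- (is_series_unique _ _ Hl), (Series_incr_n u (S N)) by (lia || exact Hu).
  apply Rplus_le_compat_l.
  assert (Hgeom : is_series (fun k => b (S N) * x ^ S N * x ^ k)
                            (b (S N) * x ^ S N / (1 - x))).
  { apply (is_series_scal_l (b (S N) * x ^ S N) (fun k => x ^ k)).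
    apply is_series_geom. rewrite Rabs_pos_eq; lra. }
  rewrite <- (is_series_unique _ _ Hgeom).
  apply Series_le; [| eexists; exact Hgeom].
  intro k. unfold u. rewrite pow_add.
  assert (0 <= x ^ S N) by (apply pow_le; lra).
  assert (0 <= x ^ k) by (apply pow_le; lra).
  assert (b (S N + k)%nat <= b (S N)) by (apply Hanti; lia).
  assert (0 <= b (S N + k)%nat) by apply Hb.
  split; [apply Rmult_le_pos; [|apply Rmult_le_pos]; assumption|].
  rewrite Rmult_assoc. apply Rmult_le_compat_r; [apply Rmult_le_pos|]; assumption.
Qed.

Lemma PI_bounds : 3141592653/1000000000 < PI < 3141592654/1000000000.
Proof.
  destruct (PI_2_3_7_ineq 5) as [H1 H2].
  unfold tg_alt, PI_2_3_7_tg, Ratan_seq in H1, H2. simpl in H1, H2. lra.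
Qed.

Lemma ellF_half_bounds : 1180340570/1000000000 <= ellF (1/2) <= 1180340601/1000000000.
Proof.
  assert (Hb : forall n, 0 <= ellK_coef n) by (intro; apply Rlt_le, ellK_coef_pos).
  assert (HF := is_pseries_ellF (1/2) ltac:(rewrite Rabs_pos_eq; lra)).
  assert (Hup := is_pseries_le_partial_geom _ (1/2) _ 19 Hb ellK_coef_antitone
                   ltac:(lra) HF).
  assert (Hlow : sum_f_R0 (fun n => ellK_coef n * (1/2) ^ n) 19 <= ellF (1/2)).
  { apply is_series_partial_le; [|apply is_pseries_R, HF].
    intro n. apply Rmult_le_pos; [apply Hb | apply pow_le; lra]. }
  simpl in Hup, Hlow. lra.
Qed.

Lemma fcor_eq_fcor_t x : x ^ 2 <= 1 -> fcor x = (PI / 2) ^ 2 * fcor_t (x ^ 2).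
Proof.
  intro Hx. unfold fcor, fcor_t. rewrite !ellK_ellF.
  replace (kprime x ^ 2) with (1 - x ^ 2) by (unfold kprime; rewrite pow2_sqrt; lra).
  ring.
Qed.

Lemma sqrt_half_sq : sqrt (1/2) ^ 2 = 1/2.
Proof. apply pow2_sqrt; lra. Qed.

Lemma inv_sqrt2_sq : (1 / sqrt 2) ^ 2 = 1/2.
Proof. rewrite <- sqrt_half_sq, sqrt_div_alt, sqrt_1 by lra. reflexivity. Qed.

Theorem corollary3p4 :
  (forall x y : R, 0 < x -> x < y -> y <= 1 / sqrt 2 -> fcor x < fcor y) /\
  (forall x y : R, 1 / sqrt 2 <= x -> x < y -> y < 1 -> fcor y < fcor x) /\
  (forall x : R, 0 < x < 1 -> fcor x <= fcor (sqrt (1/2))) /\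
  fcor (sqrt (1/2)) = 1/4 * (ellK (sqrt (1/2))) ^ 2 /\
  859398 / 1000000 <= fcor (sqrt (1/2)) < 859399 / 1000000.
Proof.
  assert (HPI : 0 < (PI / 2) ^ 2) by (apply pow_lt; generalize PI_RGT_0; lra).
  assert (Hs : 0 < 1 / sqrt 2) by (apply Rdiv_lt_0_compat, sqrt_lt_R0; lra).
  assert (Hs2 := inv_sqrt2_sq).
  assert (Hhalf : fcor (sqrt (1/2)) = (PI * ellF (1/2)) ^ 2 / 16).
  { rewrite fcor_eq_fcor_t, sqrt_half_sq by (rewrite sqrt_half_sq; lra).
    unfold fcor_t. replace (1 - 1/2) with (1/2) by field. field. }
  split; [|split; [|split; [|split]]].
  - intros x y Hx Hxy Hy. rewrite !fcor_eq_fcor_t by nra.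
    apply Rmult_lt_compat_l, fcor_t_lt; nra.
  - intros x y Hx Hxy Hy. rewrite !fcor_eq_fcor_t by nra.
    apply Rmult_lt_compat_l, fcor_t_gt; nra.
  - intros x Hx. rewrite fcor_eq_fcor_t, (fcor_eq_fcor_t (sqrt (1/2))), sqrt_half_sq
      by (rewrite ?sqrt_half_sq; nra).
    apply Rmult_le_compat_l, fcor_t_le_half; nra.
  - rewrite Hhalf, ellK_ellF, sqrt_half_sq. field.
  - rewrite Hhalf. destruct PI_bounds, ellF_half_bounds.
    assert (Hp : 3141592653/1000000000 * (1180340570/1000000000) <= PI * ellF (1/2)
                 <= 3141592654/1000000000 * (1180340601/1000000000)) by (split; nra).
    set (p := PI * ellF (1/2)) in *. split; nra.
Qed.
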